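(* For a Pólya tree $t$ with $k$ nodes let $\tilde\rho=1+\epsilon$ be the smallest positive real number satisfying $\int_0^{\tilde\rho} e^{-w(t)v^k}\,dv = 1$. Then, as $k\to\infty$ (with $t$ ranging over Pólya trees of size $k$), \[ \tilde\rho = 1+\epsilon \sim 1 + \frac{w(t)}{k}, \quad\text{i.e. } \epsilon \sim \frac{w(t)}{k}. \]
   Context: A Pólya tree is an unlabeled rooted non-plane tree. For a Pólya tree $t$ with $k$ nodes, $\ell(t)$ is the number of labelings of its nodes by $1,\dots,k$ that increase along every path from the root, and $w(t)=\ell(t)/k!$. The number $\tilde\rho$ is the dominant singularity of $S_t(z)=\ln\frac{1}{1-\int_0^z e^{-w(t)v^k}\,dv}-w(t)z^k$, the exponential generating function of recursive trees having no fringe subtree of shape $t$. *)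

From Stdlib Require Import Reals.
From Coquelicot Require Import Coquelicot.
From mathcomp Require Import all_boot perm.

Set Implicit Arguments. Unset Strict Implicit. Unset Printing Implicit Defensive.

(* A recursive tree (increasingly labelled rooted non-plane tree) on k nodes,
   labels 0..k-1 (label i stands for i+1), root 0, encoded by its parent
   function: p 0 = 0 and p i < i for i > 0. *)
Definition is_rec (k : nat) (p : {ffun 'I_k -> 'I_k}) : bool :=
  [forall i, (if nat_of_ord i == 0%N then p i == i else (p i < i)%N)%N].

(* Two recursive trees have the same shape (the same underlying Pólya tree):
   there is a bijection of the node set commuting with the parent maps
   (it then necessarily maps the root to the root). *)
Definition same_shape (k : nat) (p q : {ffun 'I_k -> 'I_k}) : bool :=
  [exists s : {perm 'I_k}, [forall i, s (p i) == q (s i)]].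

(* ell(t): number of increasing labellings of the Pólya tree t = shape of p,
   i.e. number of recursive trees on k nodes whose shape is t. *)
Definition ell (k : nat) (p : {ffun 'I_k -> 'I_k}) : nat :=
  #|[set q : {ffun 'I_k -> 'I_k} | is_rec q && same_shape p q]|.

Local Open Scope R_scope.

Definition wt (k : nat) (p : {ffun 'I_k -> 'I_k}) : R :=
  INR (ell p) / INR (factorial k).

Definition Fint (w : R) (k : nat) (x : R) : R :=
  RInt (fun v => exp (- (w * v ^ k))) 0 x.

Definition smallest_root (w : R) (k : nat) (r : R) : Prop :=
  0 < r /\ Fint w k r = 1 /\
  (forall x : R, 0 < x < r -> Fint w k x <> 1).

(* A Pólya tree on k nodes has between 1 and (k-1)! increasing labellings,
   the latter being the number of all recursive trees on k nodes, so
   0 < w <= 1/k.  Expanding exp(-w v^k) to first and second order gives, for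
   F(x) = int_0^x exp(-w v^k) dv,
     x - w x^(k+1)/(k+1) <= F(x) <= x - w x^(k+1)/(k+1) + w^2 x^(2k+1)/(2k+1).
   Since F(x) <= x and F is strictly increasing, the root r lies in
   [1, 1 + 2/k^2], where Bernoulli's inequality gives r^(k+1) <= k/(k-4).
   Feeding this back into both bounds at x = r yields
   w (1 - 3/k) <= k (r - 1) <= w (1 + 8/k). *)

From Stdlib Require Import Reals Lra Lia Psatz.
From Coquelicot Require Import Coquelicot.
From mathcomp Require Import all_boot perm.

Local Open Scope R_scope.

Lemma exp_neg_le_quadratic y : 0 <= y -> exp (- y) <= 1 - y + y ^ 2.
Proof.
move=> hy; rewrite exp_Ropp.
have hexp := exp_ineq1_le y; have hpos := exp_pos y.
have hq : 0 < 1 - y + y ^ 2 by nra.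
apply: (Rmult_le_reg_r (exp y)) => //; rewrite Rinv_l; nra.
Qed.

Lemma ex_RInt_of_ex_derive (f : R -> R) a b :
  (forall x, ex_derive f x) -> ex_RInt f a b.
Proof.
move=> hf; apply: (ex_RInt_continuous (V := R_CompleteNormedModule)) => x _.
exact: (ex_derive_continuous (K := R_AbsRing) (V := R_NormedModule)).
Qed.

Lemma RInt_antiderivative (f F : R -> R) a b :
  (forall x, is_derive F x (f x)) -> (forall x, ex_derive f x) ->
  RInt f a b = F b - F a.
Proof.
move=> hF hf.
have hcont x : continuous f x.
  exact: (ex_derive_continuous (K := R_AbsRing) (V := R_NormedModule)).
by rewrite (is_RInt_unique _ _ _ _ (@is_RInt_derive R_CompleteNormedModule F f a b
  (fun x _ => hF x) (fun x _ => hcont x))).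
Qed.

Lemma RInt_one_sub_pow a k x :
  RInt (fun v => 1 - a * v ^ k) 0 x = x - a * x ^ k.+1 / INR k.+1.
Proof.
have hk : INR k.+1 <> 0 by apply: not_0_INR.
rewrite (RInt_antiderivative _ (fun v => v - a * v ^ k.+1 / INR k.+1)).
- by rewrite pow_i /=; [field | apply/ltP].
- move=> y; auto_derive => //; rewrite -/(INR k.+1); by field.
- by move=> y; auto_derive.
Qed.

Lemma RInt_one_sub_pow_add_sq a k x :
  RInt (fun v => 1 - a * v ^ k + a ^ 2 * v ^ (2 * k)) 0 x
  = x - a * x ^ k.+1 / INR k.+1 + a ^ 2 * x ^ (2 * k).+1 / INR (2 * k).+1.
Proof.
have hk : INR k.+1 <> 0 by apply: not_0_INR.
have h2k : INR (2 * k).+1 <> 0 by apply: not_0_INR.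
rewrite (RInt_antiderivative
  _ (fun v => v - a * v ^ k.+1 / INR k.+1 + a ^ 2 * v ^ (2 * k).+1 / INR (2 * k).+1)).
- by rewrite !pow_i /=; [field | apply/ltP | apply/ltP].
- move=> y; auto_derive => //; rewrite -/(INR k.+1) -/(INR (2 * k).+1); by field.
- by move=> y; auto_derive.
Qed.

Lemma ex_RInt_Fint_integrand w k a b : ex_RInt (fun v => exp (- (w * v ^ k))) a b.
Proof. by apply: ex_RInt_of_ex_derive => x; auto_derive. Qed.

Lemma Fint_ge_poly w k x : 0 <= x -> x - w * x ^ k.+1 / INR k.+1 <= Fint w k x.
Proof.
move=> hx; rewrite -RInt_one_sub_pow /Fint.
apply: RInt_le => //; first by apply: ex_RInt_of_ex_derive => y; auto_derive.
  exact: ex_RInt_Fint_integrand.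
move=> v _; have := exp_ineq1_le (- (w * v ^ k)); lra.
Qed.

Lemma Fint_le_poly w k x : 0 <= w -> 0 <= x ->
  Fint w k x <= x - w * x ^ k.+1 / INR k.+1 + w ^ 2 * x ^ (2 * k).+1 / INR (2 * k).+1.
Proof.
move=> hw hx; rewrite -RInt_one_sub_pow_add_sq /Fint.
apply: RInt_le => //; first exact: ex_RInt_Fint_integrand.
  by apply: ex_RInt_of_ex_derive => y; auto_derive.
move=> v [hv _]; have hwv : 0 <= w * v ^ k by apply: Rmult_le_pos => //; apply: pow_le; lra.
have := exp_neg_le_quadratic _ hwv.
suff -> : v ^ (2 * k) = (v ^ k) ^ 2 by nra.
by rewrite -pow_mult mulnC.
Qed.

Lemma Fint_le_id w k x : 0 <= w -> 0 <= x -> Fint w k x <= x.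
Proof.
move=> hw hx; apply: (Rle_trans _ (RInt (fun=> 1) 0 x)).
  apply: RInt_le => //; first exact: ex_RInt_Fint_integrand.
    exact: ex_RInt_const.
  move=> v [hv _]; have : 0 <= w * v ^ k by apply: Rmult_le_pos => //; apply: pow_le; lra.
  case=> [hpos | <-]; last by rewrite Ropp_0 exp_0; lra.
  by rewrite -exp_0; left; apply: exp_increasing; lra.
by rewrite RInt_const /scal /= /mult /=; lra.
Qed.

Lemma Fint_lt w k x y : x < y -> Fint w k x < Fint w k y.
Proof.
move=> hxy; rewrite /Fint -(RInt_Chasles _ 0 x y); try exact: ex_RInt_Fint_integrand.
have : 0 < RInt (fun v => exp (- (w * v ^ k))) x y.
  apply: RInt_gt_0 => // [v _ | v _]; first exact: exp_pos.
  by apply: (ex_derive_continuous (K := R_AbsRing) (V := R_NormedModule)); auto_derive.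
rewrite /plus /=; lra.
Qed.

Lemma Bernoulli_pow_le m c : 0 <= c -> (1 + c) ^ m * (1 - INR m * c) <= 1.
Proof.
move=> hc; elim: m => [|m IH]; first by rewrite /=; lra.
rewrite S_INR /=.
have hpow : 0 <= (1 + c) ^ m by apply: pow_le; lra.
have hm := pos_INR m.
have : (1 + c) * (1 - (INR m + 1) * c) <= 1 - INR m * c by nra.
move=> /(Rmult_le_compat_l _ _ _ hpow); nra.
Qed.

Lemma pow_one_add_inv_sq_le (k : nat) : 8 <= INR k ->
  (1 + 2 / INR k ^ 2) ^ k.+1 * (INR k - 4) <= INR k.
Proof.
have := S_INR k; set n := INR k => hSk hn.
set M := (1 + 2 / n ^ 2) ^ k.+1.
have hc : 0 <= 2 / n ^ 2 by apply: Rle_mult_inv_pos; nra.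
have hM : 0 <= M by apply: pow_le; lra.
have := Bernoulli_pow_le k.+1 _ hc; rewrite -/M hSk.
have : n - 4 <= n * (1 - (n + 1) * (2 / n ^ 2)).
  have -> : n * (1 - (n + 1) * (2 / n ^ 2)) = n - 2 - 2 / n by field; lra.
  have : 2 / n <= 2 by apply/Rle_div_l; lra.
  lra.
move=> /(Rmult_le_compat_l _ _ _ hM); nra.
Qed.

Section FintRoot.

Variables (w : R) (k : nat) (r : R).
Hypotheses (hk : 8 <= INR k) (hw : 0 < w) (hwk : w * INR k <= 1)
  (hr : 0 < r) (hFr : Fint w k r = 1).

Lemma Fint_root_ge_1 : 1 <= r.
Proof. have := Fint_le_id w k r (Rlt_le _ _ hw) (Rlt_le _ _ hr); lra. Qed.

Lemma Fint_root_le : r <= 1 + 2 / INR k ^ 2.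
Proof.
move: (hk) (hwk) (pow_one_add_inv_sq_le k hk) (S_INR k).
set n := INR k; set c := 2 / n ^ 2; set M := (1 + c) ^ k.+1 => hn hwn hM hSk.
have hc : 0 <= c by apply: Rle_mult_inv_pos; nra.
have hM2 : M <= 2 by nra.
have hwM : w * M / (n + 1) <= c.
  suff : 0 <= c - w * M / (n + 1) by lra.
  have -> : c - w * M / (n + 1) = (2 * (n + 1) - w * n * (M * n)) / (n ^ 2 * (n + 1))
    by rewrite /c; field; lra.
  have hMn : 0 <= M * n by apply: Rmult_le_pos; [apply: pow_le | ]; lra.
  apply: Rle_mult_inv_pos; nra.
have hF1 : 1 <= Fint w k (1 + c).
  by have := Fint_ge_poly w k (1 + c); rewrite -/M hSk; lra.
case: (Rle_or_lt r (1 + c)) => // hrc.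
by have := Fint_lt w k _ _ hrc; lra.
Qed.

Lemma Fint_root_pow_le : r ^ k.+1 * (INR k - 4) <= INR k.
Proof.
have h1 := Fint_root_ge_1; have hle := Fint_root_le.
apply: Rle_trans (pow_one_add_inv_sq_le k hk).
by apply: Rmult_le_compat_r; [lra | apply: pow_incr; lra].
Qed.

Lemma Fint_root_upper : (r - 1) * INR k <= w * (1 + 8 / INR k).
Proof.
have := Fint_ge_poly w k r (Rlt_le _ _ hr).
have := Fint_root_pow_le; have := Fint_root_ge_1.
move: (hk); rewrite hFr S_INR; set n := INR k; set R1 := r ^ k.+1 => hn hr1 hR1 hF.
have hR1w : (r - 1) * (n + 1) <= w * R1.
  have hdiv : w * R1 / (n + 1) * (n + 1) = w * R1 by field; lra.
  nra.
have hrn : (r - 1) * (n + 1) * (n - 4) <= w * n by nra.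
apply: (Rmult_le_reg_r (n * (n + 1) * (n - 4))); first nra.
have -> : w * (1 + 8 / n) * (n * (n + 1) * (n - 4)) = w * ((n + 8) * (n + 1) * (n - 4))
  by field; lra.
have : n ^ 3 <= (n + 8) * (n + 1) * (n - 4) by nra.
nra.
Qed.

Lemma Fint_root_lower : w * (1 - 3 / INR k) <= (r - 1) * INR k.
Proof.
have := Fint_le_poly w k r (Rlt_le _ _ hw) (Rlt_le _ _ hr).
have := Fint_root_pow_le; have := Fint_root_ge_1.
have h2k : INR (2 * k).+1 = 2 * INR k + 1 by rewrite S_INR mult_INR /=; lra.
move: (hk) (hwk); rewrite hFr S_INR h2k; set n := INR k.
set R1 := r ^ k.+1; set R2 := r ^ (2 * k).+1 => hn hwn hr1 hR1 hF.
have hR1_1 : 1 <= R1 by apply: pow_R1_Rle.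
have hR2 : 0 <= R2 <= R1 ^ 2.
  split; first by apply: pow_le; lra.
  by rewrite /R1 -pow_mult; apply: Rle_pow => //; apply/leP; rewrite mulnC.
have hA : w / (n + 1) <= w * R1 / (n + 1).
  by apply: Rmult_le_compat_r; [apply: Rlt_le; apply: Rinv_0_lt_compat | nra]; lra.
have hB : w ^ 2 * R2 / (2 * n + 1) <= 2 * w / n ^ 2.
  suff : 0 <= 2 * w / n ^ 2 - w ^ 2 * R2 / (2 * n + 1) by lra.
  have -> : 2 * w / n ^ 2 - w ^ 2 * R2 / (2 * n + 1)
    = w * (2 * (2 * n + 1) - w * n * (n * R2)) / (n ^ 2 * (2 * n + 1)) by field; lra.
  have hR2_4 : R2 <= 4 by nra.
  have hnR2 : 0 <= n * R2 by apply: Rmult_le_pos; lra.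
  have hwR2 : w * n * (n * R2) <= 1 * (n * R2) by apply: Rmult_le_compat_r.
  have hR2n : n * R2 <= n * 4 by apply: Rmult_le_compat_l; lra.
  apply: Rle_mult_inv_pos; nra.
have hgap : (w / (n + 1) - 2 * w / n ^ 2) * n - w * (1 - 3 / n) = w / (n * (n + 1))
  by field; lra.
have hgap0 : 0 <= w / (n * (n + 1)) by apply: Rle_mult_inv_pos; nra.
have hrn : (w / (n + 1) - 2 * w / n ^ 2) * n <= (r - 1) * n
  by apply: Rmult_le_compat_r; lra.
lra.
Qed.

End FintRoot.

Lemma smallest_root_rel_error w k r : 8 <= INR k -> 0 < w -> w * INR k <= 1 ->
  smallest_root w k r -> Rabs ((r - 1) / (w / INR k) - 1) <= 8 / INR k.
Proof.
(* Any positive root will do; by [Fint_lt] it is unique. *)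
move=> hk hw hwk [hr [hFr _]].
have hlo := Fint_root_lower w k r hk hw hwk hr hFr.
have hhi := Fint_root_upper w k r hk hw hwk hr hFr.
set n := INR k in hk hwk hlo hhi *.
have h5 : 0 <= 5 / n by apply: Rle_mult_inv_pos; lra.
set q := (r - 1) / (w / n).
have hq : q * w = (r - 1) * n by rewrite /q; field; lra.
apply: Rabs_le; split; nra.
Qed.

Lemma card_ord_lt k x : (x <= k)%N -> #|[pred j : 'I_k | (j < x)%N]| = x.
Proof.
move=> hx; rewrite -sum1_card.
have := @big_ord_widen_cond nat 0%N addn _ k (fun _ => true) (fun _ => 1%N) hx.
by rewrite big_const_ord iter_addn_0 mul1n => <-.
Qed.

Lemma prod_maxn1_ord k : (\prod_(i < k) maxn 1 i = (k.-1)`!)%N.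
Proof.
elim: k => [|k IH]; first by rewrite big_ord0.
rewrite big_ord_recr /= IH; case: k {IH} => [|k] //=.
by rewrite factS mulnC (maxn_idPr _).
Qed.

Lemma card_is_rec k : #|[set q : {ffun 'I_k -> 'I_k} | is_rec q]| = (k.-1)`!.
Proof.
pose F (i : 'I_k) := [pred j : 'I_k | if nat_of_ord i == 0%N then j == i else (j < i)%N].
have -> : #|[set q : {ffun 'I_k -> 'I_k} | is_rec q]| = #|family F|.
  by apply: eq_card => q; rewrite inE; apply/forallP/familyP.
rewrite card_family foldrE big_image /= -prod_maxn1_ord.
apply: eq_bigr => i _; rewrite /F; case: eqP => [-> | hi].
  by rewrite (eq_card (B := pred1 i)) ?card1 // => j; rewrite !inE.
rewrite card_ord_lt ?(ltnW (ltn_ord i)) //.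
by rewrite (maxn_idPr _) //; case: (nat_of_ord i) hi.
Qed.

Lemma ell_gt0 {k} (p : {ffun 'I_k -> 'I_k}) : is_rec p -> (0 < ell p)%N.
Proof.
move=> hp; apply/card_gt0P; exists p; rewrite inE hp /=.
by apply/existsP; exists 1%g; apply/forallP => i; rewrite !perm1.
Qed.

Lemma ell_le_fact {k} (p : {ffun 'I_k -> 'I_k}) : (ell p <= (k.-1)`!)%N.
Proof.
rewrite -card_is_rec; apply: subset_leq_card; apply/subsetP => q.
by rewrite !inE => /andP[].
Qed.

Lemma wt_gt0 {k} (p : {ffun 'I_k -> 'I_k}) : is_rec p -> 0 < wt p.
Proof.
move=> hp; apply: Rdiv_lt_0_compat; apply: lt_0_INR; apply/ltP.
  exact: ell_gt0.
exact: fact_gt0.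
Qed.

Lemma wt_mul_le1 {k} (p : {ffun 'I_k -> 'I_k}) : (0 < k)%N -> wt p * INR k <= 1.
Proof.
case: k p => // k p _; rewrite /wt factS mult_INR.
have hf : 0 < INR k`! by apply: lt_0_INR; apply/ltP; exact: fact_gt0.
have hk := lt_0_INR k.+1 (Nat.lt_0_succ k).
have hell : INR (ell p) <= INR k`! by apply: le_INR; apply/leP; exact: ell_le_fact.
have -> : INR (ell p) / (INR k.+1 * INR k`!) * INR k.+1 = INR (ell p) / INR k`!
  by field; lra.
by apply: (Rmult_le_reg_r (INR k`!)); rewrite // /Rdiv Rmult_assoc Rinv_l; lra.
Qed.

Theorem corollary2p2 :
  forall eps : R, 0 < eps ->
  exists K : nat, forall k : nat, (K <= k)%N ->
  forall p : {ffun 'I_k -> 'I_k}, is_rec p ->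
  forall r : R, smallest_root (wt p) k r ->
  Rabs ((r - 1) / (wt p / INR k) - 1) <= eps.
Proof.
move=> eps heps; have [N hN] := INR_unbounded (8 / eps).
exists (maxn 8 N) => k; rewrite geq_max => /andP[/leP h8 /leP hNk] p hp r hr.
have hk8 : 8 <= INR k by apply: Rle_trans (le_INR _ _ h8); rewrite /=; lra.
have hk1 : (0 < k)%N by apply/ltP; lia.
apply: Rle_trans (smallest_root_rel_error _ _ _ hk8 (wt_gt0 p hp) (wt_mul_le1 p hk1) hr) _.
apply/Rle_div_l; first lra.
have /(Rle_div_l _ _ _ heps) : 8 / eps <= INR k by have := le_INR _ _ hNk; lra.
lra.
Qed.
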